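(* For contexts $\Gamma,\Delta$ and formulas $A,B$: if $\Gamma\vdash A$ has a focused derivation and $\Delta\vdash B$ has a focused derivation, then $\Gamma,\Delta\vdash A\bullet B$ has a focused derivation.
   Context: Formulas are built from atoms ($p,q,\dots$) by a binary product: every formula is an atom or $A\bullet B$. A context is a finite (possibly empty) list of formulas; commas denote concatenation. A context is irreducible if its leftmost formula is not a product (it is empty or begins with an atom). A focused derivation of a sequent is a finite derivation tree with no undischarged premises using only the rules: ($\bullet L$): from $A,B,\Delta\vdash C$ infer $A\bullet B,\Delta\vdash C$; ($\bullet R^{foc}$): from $\Gamma\vdash A$ and $\Delta\vdash B$ infer $\Gamma,\Delta\vdash A\bullet B$, where $\Gamma$ is irreducible; and ($id^{atm}$): $p\vdash p$ for atoms $p$. *)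

From Stdlib Require Import List.
Import ListNotations.

Inductive formula : Type :=
| atom : nat -> formula
| prod : formula -> formula -> formula.

Definition context := list formula.

Definition irreducible (G : context) : Prop :=
  match G with
  | [] => True
  | atom _ :: _ => True
  | prod _ _ :: _ => False
  end.

Inductive focused : context -> formula -> Prop :=
| foc_prodL : forall A B D C,
    focused (A :: B :: D) C -> focused (prod A B :: D) C
| foc_prodR : forall G D A B,
    irreducible G -> focused G A -> focused D B ->
    focused (G ++ D) (prod A B)
| foc_id : forall p, focused [atom p] (atom p).

From Stdlib Require Import List.
Import ListNotations.

(* If the left context starts with an atom (or is empty) the rule
   [foc_prodR] applies directly.  Otherwise it starts with a product [X • Y];
   since [foc_prodL] is invertible we may unfold it to [X, Y, ...] and conclude
   by structural induction on the leading formula, closing with [foc_prodL]. *)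

Lemma focused_prodL_inv (X Y C : formula) (G : context) :
  focused (prod X Y :: G) C -> focused (X :: Y :: G) C.
Proof.
  intros H; remember (prod X Y :: G) as L eqn:EL.
  revert G EL; induction H as [A B D C' H _ | G' D A B Girr HA _ HB IHB | p];
    intros G EL.
  - injection EL; intros; subst; exact H.
  - (* The irreducible part [G'] cannot start with the product, so it is empty
       and the product lies in the right premise. *)
    destruct G' as [|F G'].
    + simpl in EL; subst D.
      exact (foc_prodR [] (X :: Y :: G) A B I HA (IHB G eq_refl)).
    + injection EL; intros _ EF; subst F; contradiction.
  - discriminate.
Qed.

Lemma focused_prodR_cons (D : context) (B : formula) :
  focused D B ->
  forall (F : formula) (G : context) (A : formula),
  focused (F :: G) A -> focused (F :: G ++ D) (prod A B).
Proof.
  intros HD F; induction F as [p | X IHX Y _]; intros G A HG.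
  - exact (foc_prodR (atom p :: G) D A B I HG HD).
  - apply foc_prodL.
    exact (IHX (Y :: G) A (focused_prodL_inv X Y A G HG)).
Qed.

Theorem lemma1p15 (G D : context) (A B : formula) :
  focused G A -> focused D B -> focused (G ++ D) (prod A B).
Proof.
  intros HG HD; destruct G as [|F G].
  - exact (foc_prodR [] D A B I HG HD).
  - exact (focused_prodR_cons D B HD F G A HG).
Qed.
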